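(* In the setting of problem (CP1) and the prox-ADC method described in the context, suppose Assumptions 1–4 hold. Then (a) the subproblem defining $x^{k,i+1}$ is feasible for all $k,i\in\mathbb{N}$; (b) for every $k\in\mathbb{N}$ the smallest index $i$ for which the inner stopping conditions hold, denoted $i_k$, is finite.
   Context: Problem (CP1): integers $0\le m_1\le m$; $f_p:\mathbb{R}^n\to\mathbb{R}$; $\varphi_p:\mathbb{R}\to\mathbb{R}$ convex for $p\le m_1$; $\varphi_p=\delta_{(-\infty,0]}$ for $p>m_1$; minimize $\sum_{p\le m_1}\varphi_p(f_p(x))$ s.t. $f_p(x)\le0$, $p>m_1$. $I_1=\{p:\varphi_p$ nondecreasing$\}$, $I_2=\{1,\dots,m\}\setminus I_1$. Monotonic decomposition $\varphi_p=\varphi_p^\uparrow+\varphi_p^\downarrow$: if $\varphi_p$ nondecreasing, $\varphi_p^\uparrow=\varphi_p,\varphi_p^\downarrow=0$; if nonincreasing, $\varphi_p^\uparrow=0,\varphi_p^\downarrow=\varphi_p$; otherwise with a minimizer $z^*$, $\varphi^\uparrow_p=\varphi_p(z^* )$ for $z\le z^*$, $\varphi_p(z)$ for $z>z^*$; $\varphi_p^\downarrow=\varphi_p(z)-\varphi_p(z^* )$ for $z\le z^*$, $0$ for $z>z^*$. Assumption 1: for each $p$, $f_p^k=g_p^k-h_p^k$ with $g_p^k,h_p^k:\mathbb{R}^n\to\mathbb{R}$ convex, $f_p^k$ epi-converges to $f_p$; $-\infty<\liminf_{x'\to x,k\to\infty}f_p^k(x')\le\limsup_{x'\to x,k\to\infty}f_p^k(x')<\infty$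 for all $x$; $\varphi_p\circ f_p^k$ epi-converges to $\varphi_p\circ f_p$. Assumption 2: with $X^k=\{x:f_p^k(x)\le0,\ p=m_1+1..m\}$ and $\alpha_p^k=\sup_{x\in X^k}[f_p^{k+1}(x)-f_p^k(x)]_+$, there exist $x^0$ and nonnegative $\{\widehat\alpha_p^k\}_k$ ($p>m_1$) with $\alpha_p^k\le\widehat\alpha_p^k$, $\sum_{k'}\widehat\alpha_p^{k'}<\infty$ and $f_p^0(x^0)\le-\sum_{k'=0}^\infty\widehat\alpha_p^{k'}$; set $\widehat\alpha_p^k=0$ for $p\le m_1$. Assumption 3: for each $k$ there is $\ell_k>0$ with $\min\{\mathbb H(\partial g_p^k(x),\partial g_p^k(x')),\mathbb H(\partial h_p^k(x),\partial h_p^k(x'))\}\le\ell_k\|x-x'\|$ for all $x,x'$ and all $p$ ($\mathbb H$ = Hausdorff distance). Assumption 4: for each $k$, $\sum_{p\le m_1}\varphi_p(f^k_p(x))+\sum_{p>m_1}\delta_{(-\infty,0]}(f_p^k(x))$ is level-bounded. Method: choose $\lambda>0$ and positive $\epsilon_k\downarrow0$, $\delta_k\downarrow0$ with $\delta_k/(\lambda+\ell_k)\downarrow0$; $\sigma_p^k=\sum_{k'\ge k}\widehat\alpha_p^{k'}$. For a point $y$ pick $a_p\in\partial h_p^k(y)$, $b_p\in\partial g_p^k(y)$ and set $f_p^{k,\mathrm{up}}(x;y)=g_p^k(x)-h_p^k(y)-a_p^\top(x-y)+\sigma_p^k$, $f_p^{k,\mathrm{lo}}(x;y)=g_p^k(y)+b_p^\top(x-y)-h_p^k(x)$,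 and for $p\le m_1$, $\widehat F_p^k(x;y)=\varphi_p^\uparrow(f_p^{k,\mathrm{up}}(x;y))+\varphi_p^\downarrow(f_p^{k,\mathrm{lo}}(x;y))$. For $k=0,1,\dots$: $x^{k,0}=x^k$; for $i=0,1,\dots$: $x^{k,i+1}=\operatorname{argmin}_x\{\sum_{p\le m_1}\widehat F_p^k(x;x^{k,i})+\tfrac\lambda2\|x-x^{k,i}\|^2:\ f_p^{k,\mathrm{up}}(x;x^{k,i})\le0,\ p>m_1\}$; stop the inner loop (with $i_k=i$) when $f_p^{k,\mathrm{up}}(x^{k,i+1};x^{k,i})\le f_p^k(x^{k,i+1})+\sigma_p^k+\epsilon_k$ for all $p$, $f_p^{k,\mathrm{lo}}(x^{k,i+1};x^{k,i})\ge f_p^k(x^{k,i+1})-\epsilon_k$ for $p\in I_2$, and $\|x^{k,i+1}-x^{k,i}\|\le\delta_k/(\lambda+\ell_k)$; then set $x^{k+1}=x^{k,i_k}$. *)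

From HB Require Import structures.
From mathcomp Require Import all_boot all_order all_algebra.
From mathcomp Require Import all_classical all_reals all_analysis.
Set Implicit Arguments. Unset Strict Implicit. Unset Printing Implicit Defensive.
Import Order.TTheory GRing.Theory Num.Theory numFieldNormedType.Exports.
Local Open Scope classical_set_scope.
Local Open Scope ring_scope.

Section Defs.
Variable R : realType.
Variable n : nat.
Notation vec := 'rV[R]_n.

Definition dotv (u v : vec) : R := \sum_(j < n) u 0 j * v 0 j.
Definition enorm (u : vec) : R := Num.sqrt (\sum_(j < n) u 0 j ^+ 2).

Definition convex_vec (f : vec -> R) : Prop :=
  forall x y (t : R), 0 <= t -> t <= 1 ->
    f (t *: x + (1 - t) *: y) <= t * f x + (1 - t) * f y.
Definition convex_R (phi : R -> R) : Prop :=
  forall x y (t : R), 0 <= t -> t <= 1 ->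
    phi (t * x + (1 - t) * y) <= t * phi x + (1 - t) * phi y.
Definition nondecr (phi : R -> R) : Prop := forall x y, x <= y -> phi x <= phi y.
Definition nonincr (phi : R -> R) : Prop := forall x y, x <= y -> phi y <= phi x.

Definition subdiff (f : vec -> R) (x : vec) : set vec :=
  [set v | forall y, f x + dotv v (y - x) <= f y].

Definition edist_pt_set (a : vec) (B : set vec) : \bar R :=
  ereal_inf [set (enorm (a - b))%:E | b in B].
Definition hausdorff (A B : set vec) : \bar R :=
  maxe (ereal_sup [set edist_pt_set a B | a in A])
       (ereal_sup [set edist_pt_set b A | b in B]).

Definition vconv (u : nat -> vec) (x : vec) : Prop :=
  forall e : R, 0 < e -> exists N, forall k, (N <= k)%N -> enorm (u k - x) < e.

Definition epi_conv (F : nat -> vec -> \bar R) (F0 : vec -> \bar R) : Prop :=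
  forall x,
    (forall u, vconv u x -> (F0 x <= limn_einf (fun k => F k (u k)))%E) /\
    (exists u, vconv u x /\ (limn_esup (fun k => F k (u k)) <= F0 x)%E).

Definition joint_liminf (F : nat -> vec -> R) (x : vec) : \bar R :=
  ereal_sup [set y | exists (r : R) (K : nat), 0 < r /\
     y = ereal_inf [set z | exists k x', (K <= k)%N /\ enorm (x' - x) < r /\
                                 z = (F k x')%:E]].
Definition joint_limsup (F : nat -> vec -> R) (x : vec) : \bar R :=
  ereal_inf [set y | exists (r : R) (K : nat), 0 < r /\
     y = ereal_sup [set z | exists k x', (K <= k)%N /\ enorm (x' - x) < r /\
                                 z = (F k x')%:E]].

Definition delta_nonpos (z : R) : \bar R := if z <= 0 then 0%E else +oo%E.

Definition level_bounded (F : vec -> \bar R) : Prop :=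
  forall alpha : R, exists M : R, forall x, (F x <= alpha%:E)%E -> enorm x <= M.

Definition decr_to_0 (u : nat -> R) : Prop :=
  (forall k, 0 < u k) /\ (forall k, u k.+1 <= u k) /\ (u n @[n --> \oo] --> (0 : R)).

End Defs.

Section Method.
Variable R : realType.
Variables n m m1 : nat.
Notation vec := 'rV[R]_n.
Variable phi : 'I_m -> R -> R.   (* phi_p for p < m1 (0-based); others unused *)
Variable g h : 'I_m -> nat -> vec -> R.
Variable zstar : 'I_m -> R.     (* chosen minimizers for the decomposition *)

(* 0-based indices: p < m1 <-> paper's p <= m1 *)
Definition fk (p : 'I_m) (k : nat) (x : vec) : R := g p k x - h p k x.

Definition Phi (p : 'I_m) (z : R) : \bar R :=
  if (p < m1)%N then (phi p z)%:E else delta_nonpos z.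

(* I_1 : phi_p nondecreasing (the indicator is nondecreasing); I_2 = complement *)
Definition inI1 (p : 'I_m) : Prop := (m1 <= p)%N \/ nondecr (phi p).
Definition inI2 (p : 'I_m) : Prop := ~ inI1 p.

Definition phi_up (p : 'I_m) (z : R) : R :=
  if `[< nondecr (phi p) >] then phi p z
  else if `[< nonincr (phi p) >] then 0
  else if z <= zstar p then phi p (zstar p) else phi p z.
Definition phi_down (p : 'I_m) (z : R) : R :=
  if `[< nondecr (phi p) >] then 0
  else if `[< nonincr (phi p) >] then phi p z
  else if z <= zstar p then phi p z - phi p (zstar p) else 0.

Definition sigma (ahat : 'I_m -> nat -> R) (p : 'I_m) (k : nat) : R :=
  fine (\sum_(k <= k' <oo) (ahat p k')%:E)%E.

(* upper / lower models at y with chosen subgradients a (of h) and b (of g) *)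
Definition f_up (ahat : 'I_m -> nat -> R) (p : 'I_m) (k : nat) (a : vec) (y x : vec) : R :=
  g p k x - h p k y - dotv a (x - y) + sigma ahat p k.
Definition f_lo (p : 'I_m) (k : nat) (b : vec) (y x : vec) : R :=
  g p k y + dotv b (x - y) - h p k x.

Definition Fhat (ahat : 'I_m -> nat -> R) (p : 'I_m) (k : nat) (a b : vec) (y x : vec) : R :=
  phi_up p (f_up ahat p k a y x) + phi_down p (f_lo p k b y x).

Definition sub_feasible (ahat : 'I_m -> nat -> R) (k : nat) (a : 'I_m -> vec) (y x : vec) : Prop :=
  forall p : 'I_m, (m1 <= p)%N -> f_up ahat p k (a p) y x <= 0.
Definition sub_obj (ahat : 'I_m -> nat -> R) (lam : R) (k : nat) (a b : 'I_m -> vec)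
    (y x : vec) : R :=
  \sum_(p < m | (p < m1)%N) Fhat ahat p k (a p) (b p) y x
  + lam / 2 * (enorm (x - y)) ^+ 2.

(* the inner stopping test at (k, i): y = x^{k,i}, x = x^{k,i+1} *)
Definition stop_test (ahat : 'I_m -> nat -> R) (lam : R) (eps dlt ell : nat -> R)
    (k : nat) (a b : 'I_m -> vec) (y x : vec) : Prop :=
  (forall p : 'I_m, f_up ahat p k (a p) y x <= fk p k x + sigma ahat p k + eps k) /\
  (forall p : 'I_m, inI2 p -> fk p k x - eps k <= f_lo p k (b p) y x) /\
  enorm (x - y) <= dlt k / (lam + ell k).

End Method.

(* Feasibility of every subproblem rests on an invariant: for every constraint p,
   f_p^k(x^{k,i}) + sigma_p^k <= 0.  The upper model f_p^{k,up}(. ; y) majorizes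
   f_p^k + sigma_p^k and agrees with it at y, so under the invariant the centre y is
   itself feasible for the subproblem at y, and the minimizer inherits the invariant.
   Assumption 2 provides it at x^0 and carries it from x^{k,i_k} to the next outer
   iteration, since f_p^{k+1} <= f_p^k + ahat_p^k on X^k and
   sigma_p^k = ahat_p^k + sigma_p^{k+1}.

   The inner loop terminates because the model objective majorizes
   sum_p phi_p o f_p^k (phi_p^up is nondecreasing, phi_p^down nonincreasing) and is
   exact at its centre, so every inner step decreases sum_p phi_p o f_p^k by at least
   lam/2 |x^{k,i+1} - x^{k,i}|^2.  By level-boundedness the inner iterates stay in a
   box, on which the convex g_p^k, h_p^k, their subgradients and the phi_p are
   bounded; hence some step is arbitrarily short, and for a short step both
   linearization errors are proportional to the step, which is the stopping test. *)

From HB Require Import structures.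
From mathcomp Require Import all_boot all_order all_algebra.
From mathcomp Require Import all_classical all_reals all_analysis.
From mathcomp Require Import ring lra.
Set Implicit Arguments.
Unset Strict Implicit.
Unset Printing Implicit Defensive.
Import Order.TTheory GRing.Theory Num.Theory.
Local Open Scope classical_set_scope.
Local Open Scope ring_scope.

Section Vectors.
Variables (R : realType) (n : nat).
Implicit Types (u v a x y : 'rV[R]_n) (r s : R).

Definition in_box r u := forall j, `|u 0 j| <= r.

Lemma in_boxN r u : in_box r u -> in_box r (- u).
Proof. by move=> ur j; rewrite mxE normrN. Qed.

Lemma in_box_enorm u : in_box (enorm u) u.
Proof.
move=> j; rewrite /enorm -sqrtr_sqr ler_sqrt; last by apply: sumr_ge0 => *; exact: sqr_ge0.
by rewrite (bigD1 j) //= lerDl; apply: sumr_ge0 => *; exact: sqr_ge0.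
Qed.

Lemma enorm_ge0 u : 0 <= enorm u.
Proof. exact: sqrtr_ge0. Qed.

Lemma enorm0 : enorm (0 : 'rV[R]_n) = 0.
Proof. by rewrite /enorm big1 ?sqrtr0 // => j _; rewrite mxE expr0n. Qed.

Lemma dotv0 a : dotv a 0 = 0.
Proof. by rewrite /dotv big1 // => j _; rewrite mxE mulr0. Qed.

Lemma dotv_delta a j s : dotv a (s *: delta_mx 0 j) = s * a 0 j.
Proof.
rewrite /dotv (bigD1 j) //= big1 ?addr0 => [|i /negPf ij]; rewrite !mxE ?ij ?eqxx.
  by rewrite mulr1 mulrC.
by rewrite mulr0 mulr0.
Qed.

Lemma dotv_le_box a v r s : in_box r a -> in_box s v -> `|dotv a v| <= n%:R * (r * s).
Proof.
move=> ar vs; apply: le_trans (ler_norm_sum _ _ _) _.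
have -> : n%:R * (r * s) = \sum_(j < n) (r * s) by rewrite sumr_const card_ord mulr_natl.
apply: ler_sum => j _.
by rewrite normrM ler_pM.
Qed.

End Vectors.

Section ConvexReal.
Variable R : realType.
Implicit Types (ph : R -> R) (s t z : R).

Lemma convex_R_opp ph : convex_R ph -> convex_R (fun z => ph (- z)).
Proof.
move=> phc x y t t0 t1 /=.
by rewrite opprD -!mulrN; exact: phc.
Qed.

Lemma convex_R_le_max ph s t : convex_R ph -> `|t| <= s -> ph t <= Num.max (ph s) (ph (- s)).
Proof.
move=> phc; rewrite ler_norml => /andP[st ts].
have [s0|s_neq0] := eqVneq s 0.
  have -> : t = s by lra.
  by rewrite le_max lexx.
set l := (t + s) / (2 * s).
have sp : 0 < s by lra.
have l0 : 0 <= l by rewrite divr_ge0 //; lra.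
have l1 : l <= 1 by rewrite ler_pdivrMr; lra.
have -> : t = l * s + (1 - l) * - s by rewrite /l; field; lra.
apply: le_trans (phc _ _ _ l0 l1) _.
have : ph s <= Num.max (ph s) (ph (- s)) by rewrite le_max lexx.
have : ph (- s) <= Num.max (ph s) (ph (- s)) by rewrite le_max lexx orbT.
nra.
Qed.

Lemma convex_R_bounded_below ph (B : R) : convex_R ph ->
  exists L, forall z, `|z| <= B -> L <= ph z.
Proof.
move=> phc; exists (2 * ph 0 - Num.max (ph B) (ph (- B))) => z zB.
have phNz : ph (- z) <= Num.max (ph B) (ph (- B)) by apply: convex_R_le_max; rewrite ?normrN.
have h0 : 0 <= 2^-1 :> R by lra.
have h1 : 2^-1 <= 1 :> R by lra.
have := phc z (- z) _ h0 h1.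
have -> : 2^-1 * z + (1 - 2^-1) * - z = 0 by field.
lra.
Qed.

Lemma convex_R_nondecr_from_min ph zs z1 z2 : convex_R ph ->
  (forall z, ph zs <= ph z) -> zs <= z1 -> z1 <= z2 -> ph z1 <= ph z2.
Proof.
move=> phc zs_min zs1 z12.
have [z2s|z2s] := eqVneq z2 zs.
  by have -> : z1 = z2 by lra.
have d0 : 0 < z2 - zs by rewrite subr_gt0 lt_neqAle eq_sym z2s /=; lra.
set t := (z1 - zs) / (z2 - zs).
have t0 : 0 <= t by rewrite divr_ge0 //; lra.
have t1 : t <= 1 by rewrite ler_pdivrMr //; lra.
have -> : z1 = t * z2 + (1 - t) * zs by rewrite /t; field; lra.
apply: le_trans (phc _ _ _ t0 t1) _.
have := zs_min z2; nra.
Qed.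

Lemma convex_R_nonincr_to_min ph zs z1 z2 : convex_R ph ->
  (forall z, ph zs <= ph z) -> z1 <= z2 -> z2 <= zs -> ph z2 <= ph z1.
Proof.
move=> /convex_R_opp phc zs_min z12 z2s.
rewrite -[z1]opprK -[z2]opprK.
apply: (convex_R_nondecr_from_min (zs := - zs) phc); rewrite ?opprK ?lerN2 //.
Qed.

End ConvexReal.

Section MonotoneDecomposition.
Variables (R : realType) (m : nat) (phi : 'I_m -> R -> R) (zstar : 'I_m -> R).
Variable p : 'I_m.

Lemma phi_up_add_down z : phi_up phi zstar p z + phi_down phi zstar p z = phi p z.
Proof.
rewrite /phi_up /phi_down.
case: (asboolP (nondecr (phi p))) => _; first by rewrite addr0.
case: (asboolP (nonincr (phi p))) => _; first by rewrite add0r.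
by case: ifP => _; [rewrite addrC subrK | rewrite addr0].
Qed.

Hypothesis phi_convex : convex_R (phi p).
Hypothesis zstar_min :
  ~ nondecr (phi p) -> ~ nonincr (phi p) -> forall z, phi p (zstar p) <= phi p z.

Lemma phi_up_nondecr : nondecr (phi_up phi zstar p).
Proof.
move=> z1 z2 z12; rewrite /phi_up.
case: (asboolP (nondecr (phi p))) => [/(_ _ _ z12)//|nd].
case: (asboolP (nonincr (phi p))) => // ni.
have zmin := zstar_min nd ni.
case: (leP z1 (zstar p)) => z1s; case: (leP z2 (zstar p)) => z2s //.
- lra.
- by apply: (convex_R_nondecr_from_min (zs := zstar p)) => //; exact: ltW.
Qed.

Lemma phi_down_nonincr : nonincr (phi_down phi zstar p).
Proof.
move=> z1 z2 z12; rewrite /phi_down.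
case: (asboolP (nondecr (phi p))) => // nd.
case: (asboolP (nonincr (phi p))) => [/(_ _ _ z12)//|ni].
have zmin := zstar_min nd ni.
case: (leP z2 (zstar p)) => z2s; case: (leP z1 (zstar p)) => z1s //.
- by rewrite lerD2r; apply: (convex_R_nonincr_to_min (zs := zstar p)).
- lra.
- by rewrite subr_ge0.
Qed.

End MonotoneDecomposition.

Section ConvexVectors.
Variables (R : realType) (n : nat) (h : 'rV[R]_n -> R).
Implicit Types (u v a x y : 'rV[R]_n) (r : R).

Lemma subgrad_in_box y a M C : subdiff h y a -> in_box M y ->
  (forall x, in_box (M + 1) x -> `|h x| <= C) -> in_box (2 * C) a.
Proof.
move=> ha yM hC j.
have probe s : `|s| <= 1 -> s * a 0 j <= 2 * C.
  move=> s1; have := ha (y + s *: delta_mx 0 j).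
  rewrite addrAC subrr add0r dotv_delta => sub.
  have hy : `|h y| <= C by apply: hC => i; have := yM i; lra.
  have hys : `|h (y + s *: delta_mx 0 j)| <= C.
    apply: hC => i; rewrite !mxE; apply: le_trans (ler_normD _ _) _.
    apply: lerD; first exact: yM.
    rewrite normrM; apply: le_trans (ler_piMr _ _) s1 => //.
    by case: (i == j); rewrite /= ?normr1 ?normr0.
  by move: hy hys; rewrite !ler_norml => /andP[? ?] /andP[? ?]; lra.
rewrite ler_norml; apply/andP; split.
  by have := probe (-1); rewrite normrN normr1 mulN1r => /(_ (lexx _)); lra.
by have := probe 1; rewrite normr1 mul1r; apply.
Qed.

Lemma linearization_gap x y a a' K : subdiff h x a' -> in_box K a -> in_box K a' ->
  h x - h y - dotv a (x - y) <= 2 * (n%:R * (K * enorm (x - y))).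
Proof.
move=> /(_ y) sub aK a'K.
have dxy := in_box_enorm (x - y).
have dyx : in_box (enorm (x - y)) (y - x) by rewrite -[y - x]opprB; exact: in_boxN.
have := dotv_le_box a'K dyx; have := dotv_le_box aK dxy.
have := ler_norm (- dotv a' (y - x)); have := ler_norm (- dotv a (x - y)).
rewrite !normrN; lra.
Qed.

Hypothesis h_convex : convex_vec h.

Lemma convex_vec_line v : convex_R (fun t => h (t *: v)).
Proof. by move=> s t l l0 l1 /=; rewrite scalerDl -!scalerA; exact: h_convex. Qed.

Lemma convex_vec_mid u v : h (2^-1 *: (u + v)) <= 2^-1 * (h u + h v).
Proof.
have h0 : 0 <= 2^-1 :> R by lra.
have h1 : 2^-1 <= 1 :> R by lra.
have := h_convex u v h0 h1.
have -> : 1 - 2^-1 = 2^-1 :> R by field.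
by rewrite -scalerDr -mulrDr.
Qed.

(* Induction on the number k of leading coordinates allowed to be nonzero: x is the
   midpoint of 2 x' (coordinate k cleared) and of a point on the k-th axis. *)
Lemma convex_vec_box_ub_prefix k r : exists B, forall x, in_box r x ->
  (forall j : 'I_n, (k <= j)%N -> x 0 j = 0) -> h x <= B.
Proof.
elim: k r => [|k IH] r.
  exists (h 0) => x _ x0; suff -> : x = 0 by [].
  by apply/rowP => j; rewrite mxE x0.
have [B1 HB1] := IH (2 * r).
have box2 x : in_box r x -> in_box (2 * r) x.
  by move=> xr j; have := xr j; have := normr_ge0 (x 0 j); lra.
have [kn|nk] := ltnP k n; last first.
  exists B1 => x xr xzero; apply: HB1 => [|j kj]; first exact: box2.
  by have := ltn_ord j; rewrite ltnNge (leq_trans nk kj).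
pose kk := Ordinal kn; pose e : 'rV[R]_n := delta_mx 0 kk.
exists (2^-1 * (B1 + Num.max (h ((2 * r) *: e)) (h (- (2 * r) *: e)))) => x xr xzero.
pose xk := x 0 kk; pose x' := x - xk *: e.
have x'E j : x' 0 j = if j == kk then 0 else x 0 j.
  by rewrite !mxE eqxx /=; case: eqP => [->|_]; rewrite ?mulr1 ?subrr // mulr0 subr0.
have r_ge0 : 0 <= r by have := xr kk; have := normr_ge0 xk; lra.
have -> : x = 2^-1 *: (2 *: x' + (2 * xk) *: e).
  by rewrite -scalerA -scalerDr scalerA mulVf ?scale1r ?subrK //; lra.
apply: le_trans (convex_vec_mid _ _) _; rewrite ler_pM2l ?invr_gt0 ?ltr0n //.
apply: lerD.
  apply: HB1 => [j|j kj]; rewrite mxE x'E; case: eqP => [_|jk].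
  - by rewrite mulr0 normr0; lra.
  - by rewrite normrM ger0_norm ?ler_pM2l ?xr //; lra.
  - by rewrite mulr0.
  rewrite xzero ?mulr0 // ltn_neqAle kj andbT.
  by apply/eqP => kj'; apply: jk; apply: val_inj.
apply: (convex_R_le_max (convex_vec_line _)).
by rewrite normrM ger0_norm ?ler_pM2l ?xr //; lra.
Qed.

Lemma convex_vec_box_bound r : exists C, forall x, in_box r x -> `|h x| <= C.
Proof.
have [B HB] := convex_vec_box_ub_prefix n r.
have hB x : in_box r x -> h x <= B.
  by move=> xr; apply: HB => // j; rewrite leqNgt ltn_ord.
exists (`|B| + `|2 * h 0 - B|) => x xr.
have mid : h 0 <= 2^-1 * (h x + h (- x)).
  by have := convex_vec_mid x (- x); rewrite subrr scaler0.
have := hB _ (in_boxN xr); have := hB _ xr.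
have := normr_ge0 B; have := ler_norm B.
have := normr_ge0 (2 * h 0 - B); have := ler_norm (- (2 * h 0 - B)); rewrite normrN.
by rewrite ler_norml => *; apply/andP; split; lra.
Qed.

End ConvexVectors.

Lemma ex_minimal_index (P : nat -> Prop) : (exists i, P i) ->
  exists i, P i /\ forall j, (j < i)%N -> ~ P j.
Proof.
case=> i Pi; have exPb : exists i, `[< P i >] by exists i; exact/asboolP.
case: (ex_minnP exPb) => {Pi}i /asboolP Pi imin.
by exists i; split => // j ji /asboolP/imin; rewrite leqNgt ji.
Qed.

Lemma bounded_family_uniform (R : realType) (I : finType) (T : Type)
    (F : I -> T -> R) (A : T -> Prop) :
  (forall i, exists C, forall x, A x -> `|F i x| <= C) ->
  exists C, 0 <= C /\ forall i x, A x -> `|F i x| <= C.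
Proof.
move=> /choice[C FC]; exists (\big[Num.max/0]_i C i); split.
  exact: bigmax_ge_id.
by move=> i x Ax; exact: le_trans (FC i x Ax) (le_bigmax _ _ _).
Qed.

Lemma descent_small_step (R : realType) (u w : nat -> R) (L c : R) : 0 < c ->
  (forall i, u i.+1 + w i <= u i) -> (forall i, L <= u i) -> exists i, w i <= c.
Proof.
move=> c_gt0 descent u_ge; apply/not_existsP => w_big.
have w_gt i : c < w i by rewrite ltNge; apply/negP; exact: w_big.
have drop i : u i + i%:R * c <= u 0.
  elim: i => [|i IH]; first by rewrite mul0r addr0.
  by have := descent i; have := w_gt i; rewrite -natr1; lra.
pose N := Num.bound ((u 0 - L) / c).
have gap_ge0 : 0 <= (u 0 - L) / c by rewrite divr_ge0 ?subr_ge0 ?u_ge // ltW.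
have := archi_boundP gap_ge0; rewrite -/N ltr_pdivrMr //.
by have := drop N; have := u_ge N; lra.
Qed.

Lemma le_of_ereal_sup_max (R : realType) (T : Type) (F : T -> R) (X : set T) (c : R) :
  (ereal_sup [set (Num.max (F x) 0)%:E | x in X] <= c%:E)%E -> forall x, X x -> F x <= c.
Proof.
move=> supc x Xx; have := le_trans (ereal_sup_ubound (ex_intro2 _ _ x Xx erefl)) supc.
by rewrite lee_fin; apply: le_trans; rewrite le_max lexx.
Qed.

Section TailSums.
Variables (R : realType) (m : nat) (ahat : 'I_m -> nat -> R) (p : 'I_m).

Lemma sigma_eq0 k : (forall k, ahat p k = 0) -> sigma ahat p k = 0.
Proof. by move=> a0; rewrite /sigma eseries0 // => i _ _; rewrite a0. Qed.

Hypothesis ahat_ge0 : forall k, 0 <= ahat p k.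

Lemma sigma_ge0 k : 0 <= sigma ahat p k.
Proof. by apply/fine_ge0/nneseries_ge0 => i _ _; rewrite lee_fin. Qed.

Hypothesis ahat_summable : (\sum_(0 <= k <oo) (ahat p k)%:E < +oo)%E.

Lemma tail_fin_num k : (\sum_(k <= k' <oo) (ahat p k')%:E)%E \is a fin_num.
Proof.
have a0 j : (0 <= j)%N -> (0 <= (ahat p j)%:E)%E by rewrite lee_fin.
rewrite ge0_fin_numE; last by apply: nneseries_ge0 => i _ _; rewrite lee_fin.
apply: le_lt_trans ahat_summable; rewrite (nneseries_split 0 k a0) add0n leeDr //.
by apply: sume_ge0 => i _; rewrite lee_fin.
Qed.

Lemma sigmaS k : sigma ahat p k = ahat p k + sigma ahat p k.+1.
Proof.
have a0 j : (k <= j)%N -> (0 <= (ahat p j)%:E)%E by rewrite lee_fin.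
by rewrite /sigma (nneseries_split k 1 a0) addn1 big_nat1 fineD // tail_fin_num.
Qed.

Lemma sigma0E : (sigma ahat p 0)%:E = (\sum_(0 <= k <oo) (ahat p k)%:E)%E.
Proof. by rewrite /sigma fineK // tail_fin_num. Qed.

End TailSums.

Section Models.
Variables (R : realType) (n m : nat) (g h : 'I_m -> nat -> 'rV[R]_n -> R).
Variables (ahat : 'I_m -> nat -> R) (p : 'I_m) (k : nat).

Lemma f_up_center a y : f_up g h ahat p k a y y = fk g h p k y + sigma ahat p k.
Proof. by rewrite /f_up /fk subrr dotv0 subr0. Qed.

Lemma f_lo_center b y : f_lo g h p k b y y = fk g h p k y.
Proof. by rewrite /f_lo /fk subrr dotv0 addr0. Qed.

Lemma fk_le_f_up a y x : subdiff (h p k) y a ->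
  fk g h p k x + sigma ahat p k <= f_up g h ahat p k a y x.
Proof. by move=> /(_ x); rewrite /fk /f_up; lra. Qed.

Lemma f_lo_le_fk b y x : subdiff (g p k) y b -> f_lo g h p k b y x <= fk g h p k x.
Proof. by move=> /(_ x); rewrite /fk /f_lo; lra. Qed.

End Models.

Section ProxADC.
Variables (R : realType) (n m m1 : nat).
Variables (phi : 'I_m -> R -> R) (g h : 'I_m -> nat -> 'rV[R]_n -> R) (zstar : 'I_m -> R).
Variables (ahat : 'I_m -> nat -> R) (lam : R) (eps dlt ell : nat -> R).
Variables (xs : nat -> nat -> 'rV[R]_n) (a b : nat -> nat -> 'I_m -> 'rV[R]_n).

Hypothesis phi_convex : forall p : 'I_m, (p < m1)%N -> convex_R (phi p).
Hypothesis zstar_min : forall p : 'I_m, (p < m1)%N -> ~ nondecr (phi p) -> ~ nonincr (phi p) ->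
  forall z, phi p (zstar p) <= phi p z.
Hypothesis gh_convex : forall (p : 'I_m) k, convex_vec (g p k) /\ convex_vec (h p k).
Hypothesis ahat_ge0 : forall (p : 'I_m) k, 0 <= ahat p k.
Hypothesis ahat_obj0 : forall (p : 'I_m) k, (p < m1)%N -> ahat p k = 0.
Hypothesis ahat_summable : forall p : 'I_m, (m1 <= p)%N ->
  (\sum_(0 <= k <oo) (ahat p k)%:E < +oo)%E.
Hypothesis drift_le_ahat : forall (p : 'I_m) k x, (m1 <= p)%N ->
  (forall q : 'I_m, (m1 <= q)%N -> fk g h q k x <= 0) ->
  fk g h p k.+1 x - fk g h p k x <= ahat p k.
Hypothesis start_feasible : forall p : 'I_m, (m1 <= p)%N ->
  ((fk g h p 0 (xs 0 0))%:E <= - \sum_(0 <= k <oo) (ahat p k)%:E)%E.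
Hypothesis level_bdd : forall k, level_bounded
  (fun x => ((\sum_(p < m | (p < m1)%N) phi p (fk g h p k x))%:E
            + \sum_(p < m | (m1 <= p)%N) delta_nonpos (fk g h p k x))%E).
Hypothesis lam_gt0 : 0 < lam.
Hypothesis eps_gt0 : forall k, 0 < eps k.
Hypothesis step_tol_gt0 : forall k, 0 < dlt k / (lam + ell k).
Hypothesis subgrads : forall k i (p : 'I_m),
  subdiff (h p k) (xs k i) (a k i p) /\ subdiff (g p k) (xs k i) (b k i p).
Hypothesis argmin : forall k i, (exists x, sub_feasible m1 g h ahat k (a k i) (xs k i) x) ->
  sub_feasible m1 g h ahat k (a k i) (xs k i) (xs k i.+1) /\
  forall x, sub_feasible m1 g h ahat k (a k i) (xs k i) x ->
    sub_obj m1 phi g h zstar ahat lam k (a k i) (b k i) (xs k i) (xs k i.+1)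
    <= sub_obj m1 phi g h zstar ahat lam k (a k i) (b k i) (xs k i) x.
Hypothesis warm_start : forall k i,
  stop_test m1 phi g h ahat lam eps dlt ell k (a k i) (b k i) (xs k i) (xs k i.+1) ->
  (forall j, (j < i)%N ->
     ~ stop_test m1 phi g h ahat lam eps dlt ell k (a k j) (b k j) (xs k j) (xs k j.+1)) ->
  xs k.+1 0 = xs k i.

Let obj k x := \sum_(p < m | (p < m1)%N) phi p (fk g h p k x).

Let tight_feasible k y := forall p : 'I_m, (m1 <= p)%N -> fk g h p k y + sigma ahat p k <= 0.

Let sigma_obj0 (p : 'I_m) k : (p < m1)%N -> sigma ahat p k = 0.
Proof. by move=> pm; apply: sigma_eq0 => k'; exact: ahat_obj0. Qed.

Lemma tight_sub_feasible k (a' : 'I_m -> 'rV[R]_n) y :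
  tight_feasible k y -> sub_feasible m1 g h ahat k a' y y.
Proof. by move=> ty p pm; rewrite f_up_center; exact: ty. Qed.

Lemma tight_inner k i : tight_feasible k (xs k i) -> tight_feasible k (xs k i.+1).
Proof.
move=> ty p pm; have [feas _] := argmin (ex_intro _ _ (tight_sub_feasible (a k i) ty)).
exact: le_trans (fk_le_f_up g ahat _ (subgrads k i p).1) (feas p pm).
Qed.

Lemma tight_inner_all k : tight_feasible k (xs k 0) -> forall i, tight_feasible k (xs k i).
Proof. by move=> t0; elim=> // i; exact: tight_inner. Qed.

Lemma model_center k (a' b' : 'I_m -> 'rV[R]_n) y :
  \sum_(p < m | (p < m1)%N) Fhat phi g h zstar ahat p k (a' p) (b' p) y y = obj k y.
Proof.
apply: eq_bigr => p pm.
by rewrite /Fhat f_up_center f_lo_center sigma_obj0 // addr0 phi_up_add_down.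
Qed.

Lemma model_majorizes k (a' b' : 'I_m -> 'rV[R]_n) y x :
  (forall p, subdiff (h p k) y (a' p) /\ subdiff (g p k) y (b' p)) ->
  obj k x <= \sum_(p < m | (p < m1)%N) Fhat phi g h zstar ahat p k (a' p) (b' p) y x.
Proof.
move=> sub; apply: ler_sum => p pm; rewrite /Fhat -(phi_up_add_down _ zstar); apply: lerD.
  apply: phi_up_nondecr (phi_convex pm) (zstar_min pm) _ _ _.
  by have := fk_le_f_up g ahat x (sub p).1; rewrite sigma_obj0 // addr0.
apply: phi_down_nonincr (phi_convex pm) (zstar_min pm) _ _ _.
exact: f_lo_le_fk (sub p).2.
Qed.

Lemma obj_descent k i : tight_feasible k (xs k i) ->
  obj k (xs k i.+1) + lam / 2 * enorm (xs k i.+1 - xs k i) ^+ 2 <= obj k (xs k i).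
Proof.
move=> /(tight_sub_feasible (a k i)) feas; have [_ minimal] := argmin (ex_intro _ _ feas).
have := minimal _ feas; rewrite /sub_obj subrr enorm0 expr0n mulr0 addr0 model_center.
by apply: le_trans; rewrite lerD2r; apply: model_majorizes; exact: subgrads.
Qed.

Lemma inner_iterates_bounded k : tight_feasible k (xs k 0) ->
  exists M, forall i, in_box M (xs k i).
Proof.
move=> /tight_inner_all tight.
have obj_le i : obj k (xs k i) <= obj k (xs k 0).
  elim: i => // i IH; apply: le_trans IH; apply: le_trans (obj_descent (tight i)).
  by rewrite lerDl mulr_ge0 ?sqr_ge0 // divr_ge0 // ltW.
have [M HM] := level_bdd k (obj k (xs k 0)).
exists M => i j; apply: le_trans (in_box_enorm _ j) (HM _ _).
rewrite [X in (_ + X)%E]big1 ?adde0 ?lee_fin ?obj_le // => p pm.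
by rewrite /delta_nonpos ifT //; have := tight i p pm; have := sigma_ge0 (ahat_ge0 p) k; lra.
Qed.

Lemma obj_bounded_below k (C : R) :
  exists L, forall x, (forall p : 'I_m, `|fk g h p k x| <= C) -> L <= obj k x.
Proof.
have lb (p : 'I_m) : exists L : R, (p < m1)%N -> forall z, `|z| <= C -> L <= phi p z.
  case: (ltnP p m1) => pm; last by exists 0.
  by have [L HL] := convex_R_bounded_below C (phi_convex pm); exists L.
have [L HL] := choice lb.
by exists (\sum_(p < m | (p < m1)%N) L p) => x fC; apply: ler_sum => p pm; exact: HL.
Qed.

Lemma stop_test_of_short_step k i (K : R) :
  (forall j (p : 'I_m), in_box K (a k j p) /\ in_box K (b k j p)) ->
  2 * (n%:R * (K * enorm (xs k i.+1 - xs k i))) <= eps k ->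
  enorm (xs k i.+1 - xs k i) <= dlt k / (lam + ell k) ->
  stop_test m1 phi g h ahat lam eps dlt ell k (a k i) (b k i) (xs k i) (xs k i.+1).
Proof.
move=> abK gap_small step_small; split; [|split] => // [p|p _].
  have := linearization_gap (xs k i) (subgrads k i.+1 p).1 (abK i p).1 (abK i.+1 p).1.
  by rewrite /f_up /fk; lra.
have := linearization_gap (xs k i) (subgrads k i.+1 p).2 (abK i p).2 (abK i.+1 p).2.
by rewrite /f_lo /fk; lra.
Qed.

Lemma inner_data_bounded k : tight_feasible k (xs k 0) -> exists K, [/\ 0 <= K,
  forall j (p : 'I_m), in_box K (a k j p) /\ in_box K (b k j p) &
  forall j (p : 'I_m), `|fk g h p k (xs k j)| <= K].
Proof.
move=> t0; have [M iterM] := inner_iterates_bounded t0.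
have iterM1 j : in_box (M + 1) (xs k j) by move=> l; have := iterM j l; lra.
have [Cg [Cg0 gC]] := bounded_family_uniform
  (fun p => convex_vec_box_bound (gh_convex p k).1 (M + 1)).
have [Ch [Ch0 hC]] := bounded_family_uniform
  (fun p => convex_vec_box_bound (gh_convex p k).2 (M + 1)).
pose C := Num.max Cg Ch.
have gC' p x : in_box (M + 1) x -> `|g p k x| <= C.
  by move=> xM; apply: le_trans (gC p x xM) _; rewrite le_max lexx.
have hC' p x : in_box (M + 1) x -> `|h p k x| <= C.
  by move=> xM; apply: le_trans (hC p x xM) _; rewrite le_max lexx orbT.
exists (2 * C); split.
- by rewrite mulr_ge0 // le_max Cg0.
- move=> j p; split.
    exact: subgrad_in_box (subgrads k j p).1 (iterM j) (hC' p).
  exact: subgrad_in_box (subgrads k j p).2 (iterM j) (gC' p).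
- move=> j p; apply: le_trans (ler_normB _ _) _.
  by have := gC' p _ (iterM1 j); have := hC' p _ (iterM1 j); lra.
Qed.

Lemma inner_terminates k : tight_feasible k (xs k 0) ->
  exists i, stop_test m1 phi g h ahat lam eps dlt ell k (a k i) (b k i) (xs k i) (xs k i.+1).
Proof.
move=> t0; have [K [K_ge0 abK fkK]] := inner_data_bounded t0.
have [L objL] := obj_bounded_below k K.
have obj_ge j : L <= obj k (xs k j) by apply: objL; exact: fkK.
pose T := 2 * (n%:R * K).
have T_ge0 : 0 <= T by rewrite !mulr_ge0.
pose c := Num.min (eps k / (T + 1)) (dlt k / (lam + ell k)).
have c_gt0 : 0 < c.
  by rewrite lt_min step_tol_gt0 andbT; apply: divr_gt0; [exact: eps_gt0 | lra].
have lam2_gt0 : 0 < lam / 2 by rewrite divr_gt0.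
have [i] := descent_small_step (mulr_gt0 lam2_gt0 (exprn_gt0 2 c_gt0))
  (fun j => obj_descent (tight_inner_all t0 j)) obj_ge.
rewrite ler_pM2l // ler_sqr ?nnegrE ?enorm_ge0 ?(ltW c_gt0) // => step_c.
set d := enorm _ in step_c.
have step_eps : d <= eps k / (T + 1) by apply: le_trans step_c _; rewrite ge_min lexx.
have step_tol : d <= dlt k / (lam + ell k) by apply: le_trans step_c _; rewrite ge_min lexx orbT.
exists i; apply: stop_test_of_short_step abK _ step_tol.
have -> : 2 * (n%:R * (K * d)) = T * d by rewrite /T; ring.
move: step_eps; rewrite ler_pdivlMr; last lra.
by have := enorm_ge0 (xs k i.+1 - xs k i); rewrite -/d; nra.
Qed.

Lemma tight_outer k y : tight_feasible k y -> tight_feasible k.+1 y.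
Proof.
move=> ty p pm.
have yXk (q : 'I_m) : (m1 <= q)%N -> fk g h q k y <= 0.
  by move=> qm; have := ty q qm; have := sigma_ge0 (ahat_ge0 q) k; lra.
have := drift_le_ahat pm yXk; have := ty p pm.
by rewrite (sigmaS (ahat_ge0 p) (ahat_summable pm) k); lra.
Qed.

Lemma tight_start : tight_feasible 0 (xs 0 0).
Proof.
move=> p pm; have := start_feasible pm.
by rewrite -(sigma0E (ahat_ge0 p) (ahat_summable pm)) -EFinN lee_fin; lra.
Qed.

Lemma tight_outer_iterates k : tight_feasible k (xs k 0).
Proof.
elim: k => [|k IH]; first exact: tight_start.
have [i [stop earlier]] := ex_minimal_index (inner_terminates IH).
by rewrite (warm_start stop earlier); apply/tight_outer/tight_inner_all.
Qed.

Lemma subproblems_feasible k i : exists x, sub_feasible m1 g h ahat k (a k i) (xs k i) x.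
Proof. by exists (xs k i); apply/tight_sub_feasible/tight_inner_all/tight_outer_iterates. Qed.

Lemma inner_loops_terminate k :
  exists i, stop_test m1 phi g h ahat lam eps dlt ell k (a k i) (b k i) (xs k i) (xs k i.+1).
Proof. exact/inner_terminates/tight_outer_iterates. Qed.

End ProxADC.

Theorem theorem4p2 (R : realType) (n m m1 : nat)
  (f : 'I_m -> 'rV[R]_n -> R)
  (phi : 'I_m -> R -> R)
  (g h : 'I_m -> nat -> 'rV[R]_n -> R)
  (zstar : 'I_m -> R)
  (ell : nat -> R)
  (x0 : 'rV[R]_n) (ahat : 'I_m -> nat -> R)
  (lam : R) (eps dlt : nat -> R)
  (xs : nat -> nat -> 'rV[R]_n)
  (a b : nat -> nat -> 'I_m -> 'rV[R]_n) :
  (m1 <= m)%N ->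
  (* phi_p convex for p <= m1 *)
  (forall p : 'I_m, (p < m1)%N -> convex_R (phi p)) ->
  (* the minimizer used in the monotonic decomposition *)
  (forall p : 'I_m, (p < m1)%N -> ~ nondecr (phi p) -> ~ nonincr (phi p) ->
      forall z, phi p (zstar p) <= phi p z) ->
  (* Assumption 1 *)
  (forall (p : 'I_m) k, convex_vec (g p k) /\ convex_vec (h p k)) ->
  (forall p : 'I_m, epi_conv (fun k x => (fk g h p k x)%:E) (fun x => (f p x)%:E)) ->
  (forall (p : 'I_m) x, (-oo < joint_liminf (fk g h p) x)%E /\
               (joint_liminf (fk g h p) x <= joint_limsup (fk g h p) x)%E /\
               (joint_limsup (fk g h p) x < +oo)%E) ->
  (forall p : 'I_m, epi_conv (fun k x => Phi m1 phi p (fk g h p k x))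
                      (fun x => Phi m1 phi p (f p x))) ->
  (* Assumption 2 *)
  (forall (p : 'I_m) k, 0 <= ahat p k) ->
  (forall (p : 'I_m) k, (p < m1)%N -> ahat p k = 0) ->
  (forall p : 'I_m, (m1 <= p)%N ->
     (\sum_(0 <= k' <oo) (ahat p k')%:E < +oo)%E /\
     (forall k, (ereal_sup [set (Num.max (fk g h p k.+1 x - fk g h p k x) 0)%R%:E
                            | x in [set x | forall q : 'I_m, (m1 <= q)%N -> (fk g h q k x <= 0)%R]]
                 <= (ahat p k)%:E)%E) /\
     ((fk g h p 0 x0)%:E <= - \sum_(0 <= k' <oo) (ahat p k')%:E)%E) ->
  (* Assumption 3 *)
  (forall k, 0 < ell k) ->
  (forall k (p : 'I_m) x x',
     (mine (hausdorff (subdiff (g p k) x) (subdiff (g p k) x'))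
           (hausdorff (subdiff (h p k) x) (subdiff (h p k) x'))
       <= (ell k * enorm (x - x'))%:E)%E) ->
  (* Assumption 4 *)
  (forall k, level_bounded
     (fun x => ((\sum_(p < m | (p < m1)%N) phi p (fk g h p k x))%:E
               + \sum_(p < m | (m1 <= p)%N) delta_nonpos (fk g h p k x))%E)) ->
  (* parameters of the method *)
  0 < lam -> decr_to_0 eps -> decr_to_0 dlt ->
  decr_to_0 (fun k => dlt k / (lam + ell k)) ->
  (* the iterates x^{k,i} = xs k i, with chosen subgradients *)
  xs 0%N 0%N = x0 ->
  (forall k i (p : 'I_m), subdiff (h p k) (xs k i) (a k i p) /\
                 subdiff (g p k) (xs k i) (b k i p)) ->
  (* x^{k,i+1} is the minimizer of the subproblem, whenever it is feasible *)
  (forall k i, (exists x, sub_feasible m1 g h ahat k (a k i) (xs k i) x) ->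
     sub_feasible m1 g h ahat k (a k i) (xs k i) (xs k i.+1) /\
     forall x, sub_feasible m1 g h ahat k (a k i) (xs k i) x ->
       sub_obj m1 phi g h zstar ahat lam k (a k i) (b k i) (xs k i) (xs k i.+1)
       <= sub_obj m1 phi g h zstar ahat lam k (a k i) (b k i) (xs k i) x) ->
  (* x^{k+1} = x^{k, i_k}, with i_k the first index passing the stopping test *)
  (forall k i, stop_test m1 phi g h ahat lam eps dlt ell k (a k i) (b k i) (xs k i) (xs k i.+1) ->
     (forall i', (i' < i)%N ->
        ~ stop_test m1 phi g h ahat lam eps dlt ell k (a k i') (b k i') (xs k i') (xs k i'.+1)) ->
     xs k.+1 0%N = xs k i) ->
  (* (a) every subproblem is feasible, (b) every inner loop terminates *)
  (forall k i, exists x, sub_feasible m1 g h ahat k (a k i) (xs k i) x) /\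
  (forall k, exists i,
     stop_test m1 phi g h ahat lam eps dlt ell k (a k i) (b k i) (xs k i) (xs k i.+1)).
Proof.
move=> _ phi_convex zstar_min gh_convex _ _ _ ahat_ge0 ahat_obj0 A2 _ _ level_bdd lam_gt0
  [eps_gt0 _] _ [step_tol_gt0 _] start subgrads argmin warm_start.
have summable (p : 'I_m) (pm : (m1 <= p)%N) := (A2 p pm).1.
have drift (p : 'I_m) k x : (m1 <= p)%N ->
    (forall q : 'I_m, (m1 <= q)%N -> fk g h q k x <= 0) ->
    fk g h p k.+1 x - fk g h p k x <= ahat p k.
  by move=> pm; apply: (le_of_ereal_sup_max (F := fun x => fk g h p k.+1 x - fk g h p k x)
                                            ((A2 p pm).2.1 k)).
have start_feasible (p : 'I_m) (pm : (m1 <= p)%N) := (A2 p pm).2.2.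
rewrite -start in start_feasible.
split; [apply: subproblems_feasible | apply: inner_loops_terminate]; eassumption.
Qed.
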